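(* Let $V$ be a vector space over a field $\mathbb K$ and $Mag(V)$ the free unital magmatic algebra on $V$. There is a unique linear map $\Delta:Mag(V)\to Mag(V)\otimes Mag(V)$ such that $\Delta(1)=1\otimes1$, $\Delta(v)=v\otimes1+1\otimes v$ for all $v\in V$, and $\Delta(x\cdot y)=\Delta(x)\cdot(1\otimes y)+(x\otimes1)\cdot\Delta(y)-x\otimes y$ for all $x,y\in Mag(V)$; this $\Delta$ is coassociative, and with it (and the counit given by projection onto $\mathbb K1$) $Mag(V)$ is an $As^c$-$Mag$-bialgebra.
   Context: $Mag(V)=\bigoplus_{n\ge0}\mathbb K[Y_{n-1}]\otimes V^{\otimes n}$, where $Y_{n-1}$ is the set of planar binary rooted trees with $n$ leaves and the $n=0$ summand is $\mathbb K1$; the product is $(t;v_1\dots v_p)\cdot(s;v_{p+1}\dots v_{p+q})=(t\vee s;v_1\dots v_{p+q})$, $t\vee s$ being the grafting of $t$ and $s$ on a new root, with unit $1$; $V$ is identified with the summand for the one-leaf tree. The product on $Mag(V)\otimes Mag(V)$ is $(x\otimes y)\cdot(x'\otimes y')=(x\cdot x')\otimes(y\cdot y')$. An $As^c$-$Mag$-bialgebra is a vector space with a unital (not necessarily associative) product $\cdot$ and a coassociative counital coproduct $\Delta$ with $\Delta(1)=1\otimes1$ satisfying the displayed compatibility relation. *)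

From HB Require Import structures.
From mathcomp Require Import all_boot all_order all_algebra.
From mathcomp Require Import finmap.
From mathcomp.multinomials Require Import monalg.

Set Implicit Arguments.
Unset Strict Implicit.
Unset Printing Implicit Defensive.

Import GRing.Theory.
Local Open Scope ring_scope.

(* Planar binary rooted trees with n >= 1 leaves, leaves decorated by  *)
(* basis vectors of V (a tree in Y_{n-1} together with x_1 ... x_n).   *)
Inductive btree (X : Type) : Type :=
| BLeaf of X
| BNode of btree X & btree X.

Fixpoint btree_enc (X : Type) (t : btree X) : GenTree.tree X :=
  match t with
  | BLeaf x => GenTree.Leaf x
  | BNode a b => GenTree.Node 0 [:: btree_enc a; btree_enc b]
  end.

Fixpoint btree_dec (X : Type) (t : GenTree.tree X) : option (btree X) :=
  match t with
  | GenTree.Leaf x => Some (BLeaf x)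
  | GenTree.Node 0 [:: a; b] =>
      match btree_dec a, btree_dec b with
      | Some a', Some b' => Some (BNode a' b')
      | _, _ => None
      end
  | _ => None
  end.

Lemma btree_encK (X : Type) : pcancel (@btree_enc X) (@btree_dec X).
Proof. by elim=> [x|a IHa b IHb] //=; rewrite IHa IHb. Qed.

HB.instance Definition _ (X : choiceType) :=
  Choice.copy (btree X) (pcan_type (@btree_encK X)).

(* Basis of Mag(V): None is the unit 1 (the n = 0 summand K1),
   Some t is the decorated tree t. *)
Definition magb (X : choiceType) := option (btree X).

Section Mag.
Variables (K : fieldType) (X : choiceType).

Definition Vsp := {malg K[X]}.
(* Mag(V), Mag(V) (x) Mag(V), Mag(V)^{(x)3}, as free modules on the
   corresponding tensor bases. *)
Definition Mag := {malg K[(magb X)]}.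
Definition Mag2 := {malg K[(magb X * magb X)%type]}.
Definition Mag3 := {malg K[(magb X * magb X * magb X)%type]}.

Definition lext (T : choiceType) (M : lmodType K) (f : T -> M)
  (g : {malg K[T]}) : M :=
  \sum_(k <- msupp g) g@_k *: f k.

Definition bext (T U : choiceType) (M : lmodType K) (f : T -> U -> M)
  (g : {malg K[T]}) (h : {malg K[U]}) : M :=
  \sum_(k <- msupp g) \sum_(l <- msupp h) (g@_k * h@_l) *: f k l.

Definition graft (t s : magb X) : magb X :=
  match t, s with
  | None, _ => s
  | _, None => t
  | Some a, Some b => Some (BNode a b)
  end.

Definition mag_one : Mag := << None >>.
Definition mag_mul (x y : Mag) : Mag :=
  bext (fun t s => << graft t s >> : Mag) x y.

Definition mag_incl (v : Vsp) : Mag :=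
  lext (fun x => << Some (BLeaf x) >> : Mag) v.

Definition tens (x y : Mag) : Mag2 :=
  bext (fun t s => << (t, s) >> : Mag2) x y.

Definition mag2_mul (u w : Mag2) : Mag2 :=
  bext (fun p q => << (graft p.1 q.1, graft p.2 q.2) >> : Mag2) u w.

Definition tens3L (u : Mag2) (z : Mag) : Mag3 :=
  bext (fun p s => << (p.1, p.2, s) >> : Mag3) u z.
Definition tens3R (z : Mag) (u : Mag2) : Mag3 :=
  bext (fun t p => << (t, p.1, p.2) >> : Mag3) z u.
Definition DeltaId (D : Mag -> Mag2) (u : Mag2) : Mag3 :=
  lext (fun p => tens3L (D << p.1 >>) << p.2 >>) u.
Definition IdDelta (D : Mag -> Mag2) (u : Mag2) : Mag3 :=
  lext (fun p => tens3R << p.1 >> (D << p.2 >>)) u.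

(* eps (x) id and id (x) eps : Mag2 -> Mag  (K (x) Mag = Mag = Mag (x) K) *)
Definition epsId (e : Mag -> K) (u : Mag2) : Mag :=
  lext (fun p => e << p.1 >> *: (<< p.2 >> : Mag)) u.
Definition Ideps (e : Mag -> K) (u : Mag2) : Mag :=
  lext (fun p => e << p.2 >> *: (<< p.1 >> : Mag)) u.

Definition mag_counit (x : Mag) : K := x@_None.

Definition is_mag_coproduct (D : Mag -> Mag2) : Prop :=
  [/\ linear D,
      D mag_one = tens mag_one mag_one,
      (forall v : Vsp, D (mag_incl v) =
          tens (mag_incl v) mag_one + tens mag_one (mag_incl v)) &
      (forall x y : Mag, D (mag_mul x y) =
          mag2_mul (D x) (tens mag_one y) + mag2_mul (tens x mag_one) (D y)
          - tens x y)].

Definition coassociative (D : Mag -> Mag2) : Prop :=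
  forall x : Mag, DeltaId D (D x) = IdDelta D (D x).

Definition counital (D : Mag -> Mag2) (e : Mag -> K) : Prop :=
  forall x : Mag, epsId e (D x) = x /\ Ideps e (D x) = x.

Definition AscMag_bialgebra (D : Mag -> Mag2) (e : Mag -> K) : Prop :=
  [/\ forall x : Mag, mag_mul mag_one x = x /\ mag_mul x mag_one = x,
      linear D /\ linear_for *%R e,
      coassociative D /\ counital D e,
      D mag_one = tens mag_one mag_one &
      forall x y : Mag, D (mag_mul x y) =
          mag2_mul (D x) (tens mag_one y) + mag2_mul (tens x mag_one) (D y)
          - tens x y].

End Mag.

From HB Require Import structures.
From mathcomp Require Import all_boot all_algebra.
From mathcomp Require Import finmap.
From mathcomp.multinomials Require Import monalg.
From mathcomp Require Import zify.
From Stdlib Require Import FunctionalExtensionality.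

(* A basis element of Mag(V) other than 1 is a planar binary tree u whose n leaves
   carry basis vectors of V.  Let u|[i,j) be the tree obtained by keeping only the
   leaves i, ..., j-1 (the empty restriction being 1) and put
     Delta(u) = sum_(i = 0..n) u|[0,i) (x) u|[i,n).
   Restriction commutes with grafting, so splitting the sum for u \/ s at the root
   yields Delta(u) (1 (x) s) + (u (x) 1) Delta(s), where the cut u (x) s is counted
   twice: this is the compatibility relation.  Since restrictions compose,
   (u|[0,i))|[0,j) = u|[0,j) and (u|[i,n))|[0,k) = u|[i,i+k), both iterated
   coproducts are sum_(j <= i) u|[0,j) (x) u|[j,i) (x) u|[i,n).  The counit only
   sees the terms i = 0 and i = n.  Uniqueness holds because 1, the leaves and
   grafting generate Mag(V) and the defining identities fix Delta on each. *)

Set Implicit Arguments.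
Unset Strict Implicit.
Unset Printing Implicit Defensive.
Import GRing.Theory.
Local Open Scope ring_scope.

Section LinearCombinators.
Variables (K : fieldType) (U V W : lmodType K).

Lemma linear_comp (f : V -> W) (g : U -> V) :
  linear f -> linear g -> linear (f \o g).
Proof. by move=> Lf Lg a x y; rewrite /= Lg Lf. Qed.

Lemma linearD_fun (f g : U -> V) :
  linear f -> linear g -> linear (fun x => f x + g x).
Proof. by move=> Lf Lg a x y; rewrite Lf Lg scalerDr addrACA. Qed.

Lemma linearB_fun (f g : U -> V) :
  linear f -> linear g -> linear (fun x => f x - g x).
Proof. by move=> Lf Lg a x y; rewrite Lf Lg scalerBr opprD addrACA. Qed.

Lemma linear_lcomb (f : U -> V) (I : Type) (r : seq I) (a : I -> K) (e : I -> U) :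
  linear f -> f (\sum_(i <- r) a i *: e i) = \sum_(i <- r) a i *: f (e i).
Proof.
move=> Lf; pose fL : {linear U -> V} := HB.pack f (GRing.isLinear.Build K U V _ f Lf).
transitivity (\sum_(i <- r) fL (a i *: e i)); first exact: (raddf_sum fL).
by apply: eq_bigr => i _; apply: linearZ.
Qed.

End LinearCombinators.

Section LinearExtension.
Variables (K : fieldType) (T : choiceType) (M : lmodType K).
Implicit Types (f : T -> M) (g : {malg K[T]}).

Lemma monalgUZ (c : K) (k : T) : << c *g k >> = c *: (<< k >> : {malg K[T]}).
Proof. by apply/malgP=> k'; rewrite mcoeffZ !mcoeffU mulr_natr. Qed.

Lemma malg_basisE g : g = \sum_(k <- msupp g) g@_k *: << k >>.
Proof. by rewrite {1}(monalgE g); apply: eq_bigr => k _; rewrite monalgUZ. Qed.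

Lemma lextEw f g (d : {fset T}) :
  (msupp g `<=` d)%fset -> lext f g = \sum_(k <- d) g@_k *: f k.
Proof.
move=> le; rewrite /lext (big_fset_incl _ le) // => k _ /mcoeff_outdom ->.
exact: scale0r.
Qed.

Lemma lextU f k : lext f << k >> = f k.
Proof. by rewrite (lextEw _ msuppU_le) big_seq_fset1 mcoeffUU scale1r. Qed.

Lemma lext_is_linear f : linear (lext f).
Proof.
move=> a x y; pose d := (msupp x `|` msupp y `|` msupp (a *: x + y))%fset.
rewrite !(@lextEw _ _ d) ?fsubsetUr // ?/d -?fsetUA ?fsubsetUl //; last first.
  by rewrite fsetUCA fsubsetUl.
rewrite scaler_sumr -big_split; apply: eq_bigr => k _.
by rewrite mcoeffD mcoeffZ scalerDl scalerA.
Qed.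

HB.instance Definition _ f :=
  GRing.isLinear.Build K {malg K[T]} M _ (lext f) (lext_is_linear f).

Lemma eq_lext f1 f2 : f1 =1 f2 -> lext f1 =1 lext f2.
Proof. by move=> e g; apply: eq_bigr => k _; rewrite e. Qed.

Lemma lext_malgU g : lext (fun k => << k >>) g = g.
Proof. by rewrite [RHS]malg_basisE. Qed.

Lemma linear_malgE (F : {malg K[T]} -> M) :
  linear F -> F =1 lext (fun k => F << k >>).
Proof. by move=> LF g; rewrite {1}[g]malg_basisE linear_lcomb. Qed.

Lemma linear_malg_eq (F G : {malg K[T]} -> M) : linear F -> linear G ->
  (forall k, F << k >> = G << k >>) -> F =1 G.
Proof.
by move=> LF LG e g; rewrite linear_malgE // (linear_malgE LG); exact: eq_lext.
Qed.

End LinearExtension.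

Section BilinearExtension.
Variables (K : fieldType) (T U : choiceType) (M : lmodType K).
Implicit Types (f : T -> U -> M) (g : {malg K[T]}) (h : {malg K[U]}).

Lemma bextE f g h : bext f g h = lext (fun k => lext (f k) h) g.
Proof.
apply: eq_bigr => k _; rewrite scaler_sumr.
by apply: eq_bigr => l _; rewrite scalerA.
Qed.

Lemma bextEr f g h : bext f g h = lext (fun l => lext (f^~ l) g) h.
Proof.
rewrite /bext exchange_big; apply: eq_bigr => l _; rewrite scaler_sumr.
by apply: eq_bigr => k _; rewrite scalerA mulrC.
Qed.

Lemma bextUU f k l : bext f << k >> << l >> = f k l.
Proof. by rewrite bextE !lextU. Qed.

Lemma bext_linearl f h : linear (bext f ^~ h).
Proof. by move=> a x y /=; rewrite !bextE lext_is_linear. Qed.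

Lemma bext_linearr f g : linear (bext f g).
Proof. by move=> a x y; rewrite !bextEr lext_is_linear. Qed.

Lemma bilinear_malg_eq (F G : {malg K[T]} -> {malg K[U]} -> M) :
  (forall h, linear (F^~ h)) -> (forall g, linear (F g)) ->
  (forall h, linear (G^~ h)) -> (forall g, linear (G g)) ->
  (forall k l, F << k >> << l >> = G << k >> << l >>) -> forall g h, F g h = G g h.
Proof.
move=> LF1 LF2 LG1 LG2 e g h.
by apply: (linear_malg_eq (LF1 h) (LG1 h)) => k; apply: linear_malg_eq.
Qed.

End BilinearExtension.

Section Cutting.
Variable X : choiceType.
Implicit Types (t : btree X) (u v : magb X).
Local Open Scope nat_scope.

Fixpoint nleaves t : nat :=
  if t is BNode a b then nleaves a + nleaves b else 1.

Definition magb_size u : nat := if u is Some t then nleaves t else 0.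

(* [btree_cut t i j] is the restriction t|[i,j); [None] is the empty tree. *)
Fixpoint btree_cut t (i j : nat) : magb X :=
  match t with
  | BLeaf x => if (i == 0) && (0 < j) then Some (BLeaf x) else None
  | BNode a b => graft (btree_cut a i j) (btree_cut b (i - nleaves a) (j - nleaves a))
  end.

Definition magb_cut u i j : magb X := if u is Some t then btree_cut t i j else None.

Lemma nleaves_gt0 t : 0 < nleaves t.
Proof. by elim: t => //= a IHa b _; rewrite addn_gt0 IHa. Qed.

Lemma magb_size_eq0 u : (magb_size u == 0) = (u == None).
Proof. by case: u => //= t; rewrite eqn0Ngt nleaves_gt0. Qed.

Lemma graftu0 u : graft u None = u.
Proof. by case: u. Qed.

Lemma magb_size_graft u v : magb_size (graft u v) = magb_size u + magb_size v.
Proof. by case: u => [a|] //; case: v => [b|] //=; rewrite addn0. Qed.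

Lemma magb_cut_graft u v i j : magb_cut (graft u v) i j =
  graft (magb_cut u i j) (magb_cut v (i - magb_size u) (j - magb_size u)).
Proof.
case: u => [a|] /=; last by rewrite !subn0.
by case: v => [b|] //=; rewrite graftu0.
Qed.

Lemma magb_size_cut u i j : magb_size (magb_cut u i j) = minn j (magb_size u) - i.
Proof.
case: u => [t|] /=; last by rewrite minn0.
elim: t i j => [x|a IHa b IHb] i j /=.
  by case: ifP => /= [/andP[/eqP -> ?]|/negbT]; rewrite ?negb_and; lia.
by rewrite magb_size_graft IHa IHb; lia.
Qed.

Lemma magb_cut_None u i j : minn j (magb_size u) <= i -> magb_cut u i j = None.
Proof. by move=> le; apply/eqP; rewrite -magb_size_eq0 magb_size_cut subn_eq0. Qed.

Lemma magb_cut_neq_None u i j : i < minn j (magb_size u) -> magb_cut u i j != None.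
Proof. by move=> lt; rewrite -magb_size_eq0 magb_size_cut subn_eq0 -ltnNge. Qed.

Lemma magb_cut_cut u i j k l :
  magb_cut (magb_cut u i j) k l = magb_cut u (i + k) (minn j (i + l)).
Proof.
case: u => [t|] //=.
elim: t i j k l => [x|a IHa b IHb] i j k l /=.
  by do ![case: ifP => /= [|/negbT] ?] => //; exfalso; lia.
rewrite -/(magb_cut (Some a) i j) magb_cut_graft magb_size_cut /= IHa IHb.
case: (leqP (nleaves a) j) => hj; first by congr graft; congr btree_cut; lia.
have cut_b m n : minn n (nleaves b) <= m -> btree_cut b m n = None.
  exact: (@magb_cut_None (Some b)).
by congr graft; rewrite !cut_b //; lia.
Qed.

Lemma magb_cut_min u i j : magb_cut u i j = magb_cut u i (minn j (magb_size u)).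
Proof.
case: u => [t|] //=; elim: t i j => [x|a IHa b IHb] i j /=.
  by rewrite ltn_min andbT.
rewrite IHa [in RHS]IHa IHb [in RHS]IHb.
by congr graft; congr btree_cut; lia.
Qed.

Lemma magb_cut_full u j : magb_size u <= j -> magb_cut u 0 j = u.
Proof.
move=> /minn_idPr le; rewrite magb_cut_min le.
case: u {j le} => [t|] //=; elim: t => [x|a IHa b IHb] //=.
rewrite sub0n addKn -/(magb_cut (Some a) 0 _) magb_cut_min /=.
by rewrite (minn_idPr (leq_addr _ _)) IHa IHb.
Qed.

End Cutting.

Section OverlappingSums.
Variable V : zmodType.
Implicit Types F : nat -> V.

Lemma big_nat_split_overlap F p q : \sum_(0 <= i < (p + q).+1) F i =
  \sum_(0 <= i < p.+1) F i + \sum_(0 <= j < q.+1) F (p + j)%N - F p.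
Proof.
have le_p : (p <= (p + q).+1)%N by rewrite ltnW // ltnS leq_addr.
rewrite (big_cat_nat (leq0n p) le_p) /= [in RHS]big_nat_recr //= [RHS]addrAC addrK.
congr (_ + _); rewrite -{1}[p]add0n big_addn -addnS addKn.
by apply: eq_big_nat => j _; rewrite addnC.
Qed.

Lemma big_nat_triangle (T : nat -> nat -> V) n :
  \sum_(0 <= i < n.+1) \sum_(0 <= j < i.+1) T j i =
  \sum_(0 <= j < n.+1) \sum_(j <= i < n.+1) T j i.
Proof.
under eq_big_nat => i /andP[_ lt_in] do rewrite (big_nat_widen _ _ _ _ _ lt_in).
rewrite (exchange_big_dep_nat xpredT) //; apply: eq_big_nat => j _.
by rewrite /= (big_nat_widenl j 0) //; apply: eq_bigl => i; rewrite ltnS.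
Qed.

End OverlappingSums.

Section Coproduct.
Variables (K : fieldType) (X : choiceType).
Local Notation M := (Mag K X).
Local Notation M2 := (Mag2 K X).
Implicit Types (u v w : magb X) (x y : M).

Lemma mag_mulUU u v : mag_mul << u >> << v >> = << graft u v >> :> M.
Proof. exact: bextUU. Qed.

Lemma tensUU u v : tens << u >> << v >> = << (u, v) >> :> M2.
Proof. exact: bextUU. Qed.

Definition magb_deconc u : M2 :=
  \sum_(0 <= i < (magb_size u).+1) << (magb_cut u 0 i, magb_cut u i (magb_size u)) >>.

Definition mag_delta : M -> M2 := lext magb_deconc.

Lemma mag_deltaU u : mag_delta << u >> = magb_deconc u.
Proof. exact: lextU. Qed.

Lemma magb_deconc_graft u v : magb_deconc (graft u v) =
  mag2_mul (magb_deconc u) << (None, v) >> + mag2_mul << (u, None) >> (magb_deconc v)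
  - << (u, v) >>.
Proof.
rewrite /magb_deconc /mag2_mul !bextE lextU !linear_sum /=.
rewrite magb_size_graft big_nat_split_overlap.
set a := magb_size u; set b := magb_size v.
have cut_v0 : magb_cut v 0 0 = None by apply: magb_cut_None; rewrite min0n.
congr (_ + _ - _).
- apply: eq_big_nat => i /andP[_ lt_ia]; rewrite !lextU /= !magb_cut_graft.
  rewrite sub0n addKn (_ : i - a = 0)%N; last lia.
  rewrite cut_v0 (magb_cut_full (u := v)) // graftu0 [magb_cut u i _]magb_cut_min.
  by rewrite (minn_idPr (leq_addr _ _)).
- apply: eq_big_nat => j /andP[_ lt_jb]; rewrite !lextU /= !magb_cut_graft.
  rewrite sub0n !addKn (magb_cut_full (u := u)) ?leq_addr //.
  by rewrite (magb_cut_None (u := u)) //; lia.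
- rewrite !magb_cut_graft sub0n subnn addKn cut_v0 graftu0 !magb_cut_full ?leq_addr //.
  by rewrite (magb_cut_None (u := u)) //; lia.
Qed.

Lemma magb_deconc_leaf (a : X) : magb_deconc (Some (BLeaf a)) =
  << (None, Some (BLeaf a)) >> + << (Some (BLeaf a), None) >>.
Proof. by rewrite /magb_deconc big_nat_recr // big_nat1. Qed.

Lemma mag_delta_is_linear : linear mag_delta.
Proof. exact: lext_is_linear. Qed.

Lemma mag_delta_mul x y : mag_delta (mag_mul x y) =
  mag2_mul (mag_delta x) (tens (mag_one K X) y) +
  mag2_mul (tens x (mag_one K X)) (mag_delta y)
  - tens x y.
Proof.
move: x y; apply: bilinear_malg_eq => [y|x|y|x|u v].
- exact: linear_comp mag_delta_is_linear (bext_linearl _ _).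
- exact: linear_comp mag_delta_is_linear (bext_linearr _ _).
- apply: linearB_fun (bext_linearl _ _); apply: linearD_fun.
    exact: linear_comp (bext_linearl _ _) mag_delta_is_linear.
  exact: linear_comp (bext_linearl _ _) (bext_linearl _ _).
- apply: linearB_fun (bext_linearr _ _); apply: linearD_fun.
    exact: linear_comp (bext_linearr _ _) (bext_linearr _ _).
  exact: linear_comp (bext_linearr _ _) mag_delta_is_linear.
- by rewrite mag_mulUU !mag_deltaU !tensUU magb_deconc_graft.
Qed.

Lemma mag_delta_one : mag_delta (mag_one K X) = tens (mag_one K X) (mag_one K X).
Proof. by rewrite mag_deltaU tensUU /magb_deconc big_nat1. Qed.

Lemma mag_delta_incl (v : Vsp K X) : mag_delta (mag_incl v) =
  tens (mag_incl v) (mag_one K X) + tens (mag_one K X) (mag_incl v).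
Proof.
move: v; apply: linear_malg_eq => [||x].
- exact: linear_comp mag_delta_is_linear (lext_is_linear _).
- apply: linearD_fun.
    exact: linear_comp (bext_linearl _ _) (lext_is_linear _).
  exact: linear_comp (bext_linearr _ _) (lext_is_linear _).
by rewrite /mag_incl lextU mag_deltaU magb_deconc_leaf !tensUU addrC.
Qed.

Lemma mag_delta_is_coproduct : is_mag_coproduct mag_delta.
Proof.
split; [exact: mag_delta_is_linear | exact: mag_delta_one | exact: mag_delta_incl |].
exact: mag_delta_mul.
Qed.

Lemma mag_coproduct_unique D : is_mag_coproduct D -> D =1 mag_delta.
Proof.
case=> LD D1 Dincl Dmul.
have Dmul_eq x y : D x = mag_delta x -> D y = mag_delta y ->
    D (mag_mul x y) = mag_delta (mag_mul x y).
  by move=> Dx Dy; rewrite Dmul mag_delta_mul Dx Dy.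
apply: linear_malg_eq LD mag_delta_is_linear _ => -[t|]; last first.
  by rewrite -/(mag_one K X) D1 mag_delta_one.
elim: t => [a|a IHa b IHb].
  rewrite -[<< _ >>](lextU (fun k : X => << Some (BLeaf k) >> : M)).
  by rewrite Dincl mag_delta_incl.
rewrite -[<< _ >>](mag_mulUU (Some a) (Some b)).
exact: Dmul_eq IHa IHb.
Qed.

Lemma mag_mul1m x : mag_mul (mag_one K X) x = x.
Proof. by rewrite /mag_mul bextE lextU lext_malgU. Qed.

Lemma mag_mulm1 x : mag_mul x (mag_one K X) = x.
Proof.
rewrite /mag_mul bextE -[RHS]lext_malgU; apply: eq_lext => u.
by rewrite lextU graftu0.
Qed.

Lemma mag_counit_is_scalar : linear_for *%R (@mag_counit K X).
Proof. by move=> a x y; rewrite /mag_counit mcoeffD mcoeffZ. Qed.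

Lemma mag_counitU w : mag_counit (<< w >> : M) = (w == None)%:R.
Proof. by rewrite /mag_counit mcoeffU. Qed.

Lemma mag_delta_counitl x : epsId (@mag_counit K X) (mag_delta x) = x.
Proof.
move: x; apply: linear_malg_eq => [||u];
  [exact: linear_comp (lext_is_linear _) mag_delta_is_linear | by move=> a x y |].
rewrite mag_deltaU /epsId linear_sum /= big_nat_recl // lextU mag_counitU /=.
rewrite magb_cut_None ?min0n // eqxx scale1r magb_cut_full //.
rewrite big_nat_cond big1 ?addr0 //.
move=> i /andP[/andP[_ lt_in] _]; rewrite lextU mag_counitU /=.
by rewrite (negbTE (magb_cut_neq_None _)) ?scale0r //; lia.
Qed.

Lemma mag_delta_counitr x : Ideps (@mag_counit K X) (mag_delta x) = x.
Proof.
move: x; apply: linear_malg_eq => [||u];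
  [exact: linear_comp (lext_is_linear _) mag_delta_is_linear | by move=> a x y |].
rewrite mag_deltaU /Ideps linear_sum /= big_nat_recr // lextU mag_counitU /=.
rewrite magb_cut_None ?geq_minr // eqxx scale1r magb_cut_full //.
rewrite big_nat_cond big1 ?add0r //.
move=> i /andP[/andP[_ lt_in] _]; rewrite lextU mag_counitU /=.
by rewrite (negbTE (magb_cut_neq_None _)) ?scale0r //; lia.
Qed.

Lemma DeltaId_deconc u (n := magb_size u) :
  DeltaId mag_delta (magb_deconc u) = \sum_(0 <= i < n.+1) \sum_(0 <= j < i.+1)
    << (magb_cut u 0 j, magb_cut u j i, magb_cut u i n) >>.
Proof.
rewrite /DeltaId linear_sum /=; apply: eq_big_nat => i /andP[_]; rewrite ltnS => le_in.
rewrite lextU mag_deltaU /tens3L bextE linear_sum /= magb_size_cut subn0.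
rewrite (minn_idPl le_in); apply: eq_big_nat => j /andP[_]; rewrite ltnS => le_ji.
by rewrite !lextU /= !magb_cut_cut /= (minn_idPr le_ji) minnn.
Qed.

Lemma IdDelta_deconc u (n := magb_size u) :
  IdDelta mag_delta (magb_deconc u) = \sum_(0 <= j < n.+1) \sum_(j <= i < n.+1)
    << (magb_cut u 0 j, magb_cut u j i, magb_cut u i n) >>.
Proof.
rewrite /IdDelta linear_sum /=; apply: eq_big_nat => j /andP[_]; rewrite ltnS => le_jn.
rewrite lextU mag_deltaU /tens3R bextEr linear_sum /= magb_size_cut minnn.
rewrite (big_addn 0 _ j) subSn //.
apply: eq_big_nat => k /andP[_]; rewrite ltnS => le_k.
rewrite !lextU /= !magb_cut_cut /= addn0 (subnKC le_jn) minnn (addnC k j).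
by rewrite (minn_idPr _) //; lia.
Qed.

Lemma mag_delta_coassoc : coassociative mag_delta.
Proof.
rewrite /coassociative; apply: linear_malg_eq => [||u];
  try exact: linear_comp (lext_is_linear _) mag_delta_is_linear.
by rewrite mag_deltaU DeltaId_deconc IdDelta_deconc big_nat_triangle.
Qed.

End Coproduct.

Theorem proposition1p3 (K : fieldType) (X : choiceType) :
  (exists! D : Mag K X -> Mag2 K X, is_mag_coproduct D) /\
  (forall D : Mag K X -> Mag2 K X, is_mag_coproduct D ->
     coassociative D /\ AscMag_bialgebra D (@mag_counit K X)).
Proof.
have eq_delta (D : Mag K X -> Mag2 K X) : is_mag_coproduct D -> D = @mag_delta K X.
  by move=> HD; apply: functional_extensionality; exact: mag_coproduct_unique.
split.
  exists (@mag_delta K X); split; first exact: mag_delta_is_coproduct.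
  by move=> D /eq_delta ->.
move=> D /eq_delta ->; have coassoc := @mag_delta_coassoc K X.
split=> //; split=> //.
- by move=> x; rewrite mag_mul1m mag_mulm1.
- by split; [exact: mag_delta_is_linear | exact: mag_counit_is_scalar].
- by split=> // x; rewrite mag_delta_counitl mag_delta_counitr.
- exact: mag_delta_one.
- exact: mag_delta_mul.
Qed.
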